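(* If $s>0$ is a knot of $p_0$, then with probability one there exists $n_0$ such that for all $n\ge n_0$, $s$ is a knot of $\hat p_n$.
   Context: For a real sequence $p=(p(k))_{k\in\mathbb N}$ (with $\mathbb N=\{0,1,2,\dots\}$) and $k\ge1$ let $\Delta p(k)=p(k+1)-2p(k)+p(k-1)$. A sequence $p$ is convex if $\Delta p(k)\ge0$ for all integers $k\ge1$; let $\mathcal C$ be the set of convex sequences with $\sum_k p(k)^2<\infty$. A knot of a sequence $p$ is an integer $k\ge1$ with $\Delta p(k)>0$. Let $p_0$ be a convex probability mass function (pmf) on $\mathbb N$ whose support is either $\mathbb N$ or $\{0,1,\dots,S\}$ for some integer $S\ge1$. Let $X_1,X_2,\dots$ be i.i.d. with pmf $p_0$, let $p_n(j)=\frac1n\sum_{i=1}^n\mathbb 1\{X_i=j\}$, and let the least squares estimator $\hat p_n$ be the unique minimizer over $\mathcal C$ of $\Phi_n(p)=\frac12\sum_{j\in\mathbb N}(p_n(j)-p(j))^2$. *)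

From Stdlib Require Import Reals Lra List.
Open Scope R_scope.

Definition rseq := nat -> R.

(* second difference, used for k >= 1 *)
Definition Delta (p : rseq) (k : nat) : R := p (S k) - 2 * p k + p (pred k).

Definition convex_seq (p : rseq) : Prop := forall k, (1 <= k)%nat -> Delta p k >= 0.

Definition square_summable (p : rseq) : Prop :=
  exists l, infinite_sum (fun k => (p k) ^ 2) l.

Definition inC (p : rseq) : Prop := convex_seq p /\ square_summable p.

Definition is_knot (p : rseq) (k : nat) : Prop := (1 <= k)%nat /\ Delta p k > 0.

Definition is_pmf (p : rseq) : Prop := (forall k, 0 <= p k) /\ infinite_sum p 1.

Definition support_ok (p : rseq) : Prop :=
  (forall k, p k > 0) \/
  exists S0 : nat, (1 <= S0)%nat /\ forall k, (p k > 0 <-> (k <= S0)%nat).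

(* sample path: omega i is the observation X_{i+1} *)
Definition sample := nat -> nat.

Fixpoint count_obs (omega : sample) (j n : nat) : nat :=
  match n with
  | O => O
  | S m => (count_obs omega j m + if Nat.eqb (omega m) j then 1 else 0)%nat
  end.

Definition emp (omega : sample) (n : nat) : rseq :=
  fun j => INR (count_obs omega j n) / INR n.

Definition Phi_val (omega : sample) (n : nat) (p : rseq) (v : R) : Prop :=
  infinite_sum (fun j => / 2 * (emp omega n j - p j) ^ 2) v.

Definition is_LSE (omega : sample) (n : nat) (q : rseq) : Prop :=
  inC q /\
  forall p, inC p -> forall vq vp, Phi_val omega n q vq -> Phi_val omega n p vp -> vq <= vp.

(* i.i.d. product measure with marginal p0 on N^N, via null sets of the
   outer measure generated by cylinder sets *)
Fixpoint in_cyl (l : list nat) (omega : sample) (i : nat) : Prop :=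
  match l with
  | nil => True
  | x :: t => omega i = x /\ in_cyl t omega (S i)
  end.

Fixpoint cyl_prob (p0 : rseq) (l : list nat) : R :=
  match l with
  | nil => 1
  | x :: t => p0 x * cyl_prob p0 t
  end.

Definition null_set (p0 : rseq) (E : sample -> Prop) : Prop :=
  forall eps, eps > 0 ->
  exists c : nat -> list nat,
    (forall omega, E omega -> exists m, in_cyl (c m) omega 0) /\
    (forall N, sum_f_R0 (fun m => cyl_prob p0 (c m)) N <= eps).

Definition almost_surely (p0 : rseq) (P : sample -> Prop) : Prop :=
  null_set p0 (fun omega => ~ P omega).

(* Since C is convex, comparing Phi_n at the estimator and at its midpoint with p0
   gives |q - p0|^2 <= 2 |p_n - p0|^2 in l^2 (parallelogram identity).  The empirical
   pmf converges to p0 in l^2 almost surely: the frequencies of finitely many atoms and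
   of the tail {X > M} obey Chernoff bounds with geometric rates, hence Borel--Cantelli.
   Once every |q k - p0 k| < Delta p0 s / 4, the second difference of q at s is
   positive. *)

From Pilot Require Import Defs.
From Stdlib Require Import Reals Lra Lia Classical ClassicalEpsilon List.
Open Scope R_scope.

Lemma sum_f_R0_scal_l c f N : sum_f_R0 (fun i => c * f i) N = c * sum_f_R0 f N.
Proof. rewrite scal_sum. apply sum_eq. intros; ring. Qed.

Lemma sum_f_R0_nonneg_le f n m :
  (forall k, 0 <= f k) -> (n <= m)%nat -> sum_f_R0 f n <= sum_f_R0 f m.
Proof. intros Hf H. induction H; [lra|]. rewrite tech5. specialize (Hf (S m)). lra. Qed.

Lemma geometric_half_sum N : sum_f_R0 (fun k => (/2) ^ S k) N = 1 - (/2) ^ S N.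
Proof. induction N; simpl in *; [field|]. rewrite IHN. field. Qed.

Lemma sum_f_R0_indicator (v : nat) (f : nat -> R) N :
  sum_f_R0 (fun j => if Nat.eqb j v then f j else 0) N = if Nat.leb v N then f v else 0.
Proof.
  induction N.
  - simpl. destruct v; reflexivity.
  - rewrite tech5, IHN.
    destruct (Nat.eqb_spec (S N) v), (Nat.leb_spec v N), (Nat.leb_spec v (S N)); subst; try lia; ring.
Qed.

Lemma sum_f_R0_truncate M (f : nat -> R) N :
  sum_f_R0 (fun j => if Nat.ltb M j then 0 else f j) N = sum_f_R0 f (Nat.min N M).
Proof.
  induction N.
  - simpl. destruct M; reflexivity.
  - rewrite tech5, IHN. destruct (Nat.ltb_spec M (S N)).
    + replace (Nat.min (S N) M) with (Nat.min N M) by lia. ring.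
    + replace (Nat.min (S N) M) with (S N) by lia. replace (Nat.min N M) with N by lia.
      rewrite tech5. reflexivity.
Qed.

Lemma infinite_sum_eventually_const f l N0 :
  (forall N, (N0 <= N)%nat -> sum_f_R0 f N = l) -> infinite_sum f l.
Proof.
  intros H eps He. exists N0. intros n Hn. rewrite H by lia.
  unfold Rdist. rewrite Rminus_diag, Rabs_R0. lra.
Qed.

Lemma series_of_bounded_partial_sums f B :
  (forall k, 0 <= f k) -> (forall N, sum_f_R0 f N <= B) ->
  exists l, infinite_sum f l /\ l <= B.
Proof.
  intros Hf HB.
  assert (Hgrow : Un_growing (sum_f_R0 f)) by (intro n; rewrite tech5; specialize (Hf (S n)); lra).
  assert (Hub : has_ub (sum_f_R0 f)) by (exists B; intros x [i ->]; apply HB).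
  destruct (growing_cv _ Hgrow Hub) as [l Hl].
  exists l; split; [exact Hl|].
  destruct (Rle_or_lt l B) as [h|h]; auto.
  destruct (Hl (l - B)) as [N HN]; [lra|].
  specialize (HN N (le_n _)). specialize (HB N). unfold Rdist in HN.
  apply Rabs_def2 in HN. lra.
Qed.

Lemma partial_sum_le_series f l :
  (forall k, 0 <= f k) -> infinite_sum f l -> forall N, sum_f_R0 f N <= l.
Proof.
  intros Hf Hl N. apply growing_ineq; auto.
  intro n. rewrite tech5. specialize (Hf (S n)). lra.
Qed.

Lemma term_le_series f l k : (forall k, 0 <= f k) -> infinite_sum f l -> f k <= l.
Proof.
  intros Hf Hl. apply Rle_trans with (sum_f_R0 f k); [|apply partial_sum_le_series; auto].
  destruct k; simpl; [lra|]. pose proof (cond_pos_sum f k Hf). lra.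
Qed.

Lemma infinite_sum_ext f g a : (forall k, f k = g k) -> infinite_sum f a -> infinite_sum g a.
Proof.
  intros E H. apply (Un_cv_ext (sum_f_R0 f)); auto.
  intro n. apply sum_eq. auto.
Qed.

Lemma infinite_sum_plus f g a b : infinite_sum f a -> infinite_sum g b ->
  infinite_sum (fun k => f k + g k) (a + b).
Proof.
  intros Ha Hb. apply (Un_cv_ext (fun n => sum_f_R0 f n + sum_f_R0 g n)).
  - intro n. symmetry. apply sum_plus.
  - apply CV_plus; auto.
Qed.

Lemma infinite_sum_scal f a c : infinite_sum f a -> infinite_sum (fun k => c * f k) (c * a).
Proof.
  intros Ha. apply (Un_cv_ext (fun n => c * sum_f_R0 f n)).
  - intro n. symmetry. apply sum_f_R0_scal_l.
  - apply CV_mult; auto.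
    intros eps He. exists 0%nat. intros. unfold Rdist. rewrite Rminus_diag, Rabs_R0. lra.
Qed.

Lemma square_summable_lincomb f g h a b :
  square_summable f -> square_summable g -> (forall j, h j = a * f j + b * g j) ->
  square_summable h.
Proof.
  intros [lf Hf] [lg Hg] Eh.
  destruct (series_of_bounded_partial_sums (fun j => h j ^ 2) (2 * a^2 * lf + 2 * b^2 * lg))
    as [l [Hl _]]; [intro; apply pow2_ge_0| |exists l; exact Hl].
  intro N.
  apply Rle_trans with (sum_f_R0 (fun j => 2 * a^2 * f j ^ 2 + 2 * b^2 * g j ^ 2) N).
  - apply sum_Rle. intros j _. rewrite Eh.
    pose proof (pow2_ge_0 (a * f j - b * g j)). nra.
  - rewrite sum_plus, !sum_f_R0_scal_l.
    pose proof (partial_sum_le_series _ _ (fun k => pow2_ge_0 (f k)) Hf N).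
    pose proof (partial_sum_le_series _ _ (fun k => pow2_ge_0 (g k)) Hg N).
    pose proof (pow2_ge_0 a). pose proof (pow2_ge_0 b). nra.
Qed.

Lemma inC_midpoint p q : inC p -> inC q -> inC (fun j => (p j + q j) / 2).
Proof.
  intros [Cp Sp] [Cq Sq]. split.
  - intros j Hj. specialize (Cp j Hj). specialize (Cq j Hj). unfold Defs.Delta in *. lra.
  - apply (square_summable_lincomb p q _ (/2) (/2)); auto. intro; field.
Qed.

Lemma LSE_sq_dist_le omega n q p E :
  inC p -> is_LSE omega n q ->
  infinite_sum (fun j => (emp omega n j - p j) ^ 2) E ->
  forall k, (q k - p k) ^ 2 <= 2 * E.
Proof.
  intros Cp [Cq Hmin] HE k.
  set (e := emp omega n) in *.
  destruct (square_summable_lincomb p q (fun j => p j - q j) 1 (-1)) as [D HD];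
    [apply Cp|apply Cq|intro; ring|].
  destruct (square_summable_lincomb (fun j => e j - p j) (fun j => p j - q j)
              (fun j => e j - q j) 1 1) as [A HA];
    [exists E; exact HE|exists D; exact HD|intro; ring|].
  assert (Vq : Phi_val omega n q (/2 * A)) by (apply infinite_sum_scal, HA).
  assert (Vmid : Phi_val omega n (fun j => (p j + q j) / 2) (/4 * A + (/4 * E + - /8 * D))).
  { apply (infinite_sum_ext
      (fun j => /4 * (e j - q j) ^ 2 + (/4 * (e j - p j) ^ 2 + - /8 * (p j - q j) ^ 2))).
    - intro j. fold e. field.
    - apply infinite_sum_plus; [apply infinite_sum_scal, HA|].
      apply infinite_sum_plus; apply infinite_sum_scal; assumption. }
  pose proof (Hmin _ (inC_midpoint p q Cp Cq) _ _ Vq Vmid).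
  pose proof (term_le_series _ _ 0 (fun j => pow2_ge_0 (e j - q j)) HA).
  pose proof (term_le_series _ _ k (fun j => pow2_ge_0 (p j - q j)) HD).
  pose proof (pow2_ge_0 (e 0%nat - q 0%nat)).
  replace ((q k - p k) ^ 2) with ((p k - q k) ^ 2) by ring. lra.
Qed.

Definition cover := nat -> option (list nat).

Definition cover_mass (p0 : rseq) (c : cover) (m : nat) : R :=
  match c m with Some l => cyl_prob p0 l | None => 0 end.

Definition covers (c : cover) (E : sample -> Prop) : Prop :=
  forall omega, E omega -> exists m l, c m = Some l /\ in_cyl l omega 0.

(* [E] has cylinder outer measure at most [w]; unlike in [null_set], slots may be empty. *)
Definition outer_le (p0 : rseq) (E : sample -> Prop) (w : R) : Prop :=
  forall eps, eps > 0 ->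
  exists c, covers c E /\ forall N, sum_f_R0 (cover_mass p0 c) N <= w + eps.

Definition shift (omega : sample) : sample := fun i => omega (S i).

Lemma in_cyl_shift l omega i : in_cyl l (shift omega) i <-> in_cyl l omega (S i).
Proof. revert i. induction l; intro i; simpl; [tauto|]. unfold shift at 1. rewrite IHl. tauto. Qed.

(* Slot [2^k (2i+1) - 1] of [interleave cs] holds [cs k i]; the fuel [S m]
   suffices because [div2] strictly decreases positive indices. *)
Fixpoint interleave_fuel (fuel : nat) (cs : nat -> cover) (m : nat) : option (list nat) :=
  match fuel with
  | O => None
  | S f => if Nat.even m then cs O (Nat.div2 m)
           else interleave_fuel f (fun k => cs (S k)) (Nat.div2 m)
  end.

Definition interleave (cs : nat -> cover) : cover := fun m => interleave_fuel (S m) cs m.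

Lemma interleave_fuel_S f cs m : interleave_fuel (S f) cs m =
  if Nat.even m then cs O (Nat.div2 m) else interleave_fuel f (fun k => cs (S k)) (Nat.div2 m).
Proof. reflexivity. Qed.

Lemma interleave_fuel_enough f g cs m :
  (m < f)%nat -> (m < g)%nat -> interleave_fuel f cs m = interleave_fuel g cs m.
Proof.
  revert g cs m. induction f as [|f IH]; intros g cs m Hf Hg; [lia|].
  destruct g as [|g]; [lia|]. simpl. destruct (Nat.even m) eqn:Ev; [reflexivity|].
  assert (0 < m)%nat by (destruct m; [discriminate|lia]).
  pose proof (Nat.lt_div2 m H). apply IH; lia.
Qed.

Lemma interleave_even cs i : interleave cs (2 * i)%nat = cs O i.
Proof.
  unfold interleave. rewrite interleave_fuel_S, Nat.even_even, Nat.div2_double. reflexivity.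
Qed.

Lemma interleave_odd cs i : interleave cs (S (2 * i)) = interleave (fun k => cs (S k)) i.
Proof.
  unfold interleave. rewrite interleave_fuel_S.
  replace (Nat.even (S (2 * i))) with false
    by (rewrite <- (Nat.even_odd i); f_equal; lia).
  rewrite Nat.div2_succ_double. apply interleave_fuel_enough; lia.
Qed.

Lemma interleave_surj k : forall cs i, exists m, interleave cs m = cs k i.
Proof.
  induction k; intros cs i.
  - exists (2 * i)%nat. apply interleave_even.
  - destruct (IHk (fun k => cs (S k)) i) as [m Hm].
    exists (S (2 * m)). rewrite interleave_odd. exact Hm.
Qed.

Section Outer_measure.
Variable p0 : rseq.
Hypothesis p0_ge0 : forall k, 0 <= p0 k.

Lemma cyl_prob_nonneg l : 0 <= cyl_prob p0 l.
Proof. induction l; simpl; [lra|]. apply Rmult_le_pos; auto. Qed.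

Lemma cover_mass_nonneg c m : 0 <= cover_mass p0 c m.
Proof. unfold cover_mass. destruct (c m); [apply cyl_prob_nonneg|lra]. Qed.

Lemma outer_le_mono (E F : sample -> Prop) w w' :
  (forall omega, E omega -> F omega) -> w <= w' -> outer_le p0 F w -> outer_le p0 E w'.
Proof.
  intros HEF Hw H eps He. destruct (H eps He) as [c [Hc Hs]].
  exists c. split; [intros om Hom; apply Hc, HEF, Hom|]. intro N. specialize (Hs N). lra.
Qed.

Lemma outer_le_empty (E : sample -> Prop) : (forall omega, ~ E omega) -> outer_le p0 E 0.
Proof.
  intros HE eps He. exists (fun _ => None). split.
  - intros om Hom. destruct (HE om Hom).
  - intro N. unfold cover_mass. rewrite sum_eq_R0 by auto. lra.
Qed.

Lemma outer_le_full (E : sample -> Prop) : outer_le p0 E 1.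
Proof.
  intros eps He. set (c := (fun m : nat => match m with O => Some nil | S _ => None end) : cover).
  exists c. split; [intros om _; exists O, nil; simpl; auto|].
  intro N. replace (sum_f_R0 (cover_mass p0 c) N) with 1; [lra|].
  induction N; [reflexivity|]. rewrite tech5, <- IHN. unfold cover_mass. simpl. ring.
Qed.

Lemma outer_le_prefix x (E : sample -> Prop) w : outer_le p0 E w ->
  outer_le p0 (fun omega => omega O = x /\ E (shift omega)) (p0 x * w).
Proof.
  intros H eps He. pose proof (p0_ge0 x) as Hx.
  destruct (H (eps / (p0 x + 1))) as [c [Hc Hs]]; [apply Rdiv_lt_0_compat; lra|].
  exists (fun m => match c m with Some l => Some (x :: l) | None => None end). split.
  - intros om [H0 Hom]. destruct (Hc _ Hom) as [m [l [Hm Hl]]].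
    exists m, (x :: l). rewrite Hm. split; [reflexivity|]. simpl. split; auto.
    apply in_cyl_shift. exact Hl.
  - intro N. rewrite (sum_eq _ (fun m => p0 x * cover_mass p0 c m)), sum_f_R0_scal_l
      by (intros i _; unfold cover_mass; destruct (c i); simpl; ring).
    specialize (Hs N).
    assert (p0 x * (eps / (p0 x + 1)) <= eps).
    { apply Rmult_le_reg_r with (p0 x + 1); [lra|]. field_simplify; nra. }
    apply Rle_trans with (p0 x * (w + eps / (p0 x + 1))); [apply Rmult_le_compat_l|]; lra.
Qed.

Lemma interleave_mass_odd cs M :
  sum_f_R0 (cover_mass p0 (interleave cs)) (S (2 * M)) =
  sum_f_R0 (cover_mass p0 (cs O)) M + sum_f_R0 (cover_mass p0 (interleave (fun k => cs (S k)))) M.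
Proof.
  unfold cover_mass. induction M.
  - simpl. rewrite (interleave_even cs 0 : interleave cs 0%nat = _).
    rewrite (interleave_odd cs 0 : interleave cs 1%nat = _). reflexivity.
  - replace (S (2 * S M)) with (S (S (S (2 * M)))) by lia.
    rewrite !tech5, <- Rplus_assoc, <- tech5, IHM.
    replace (S (S (2 * M))) with (2 * S M)%nat by lia.
    rewrite interleave_even, interleave_odd. ring.
Qed.

Lemma interleave_mass_le N : forall cs (B : nat -> R),
  (forall k M, sum_f_R0 (cover_mass p0 (cs k)) M <= B k) -> (forall k, 0 <= B k) ->
  sum_f_R0 (cover_mass p0 (interleave cs)) N <= sum_f_R0 B N.
Proof.
  induction N as [N IH] using (well_founded_induction Wf_nat.lt_wf). intros cs B HB HB0.
  destruct N as [|N].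
  - specialize (HB O O). simpl in *. unfold cover_mass in *.
    rewrite (interleave_even cs 0 : interleave cs 0%nat = _). exact HB.
  - set (d := Nat.div2 (S N)).
    assert (Hd : (S N <= S (2 * d))%nat).
    { pose proof (Nat.div2_odd (S N)). destruct (Nat.odd (S N)); cbn [Nat.b2n] in H; unfold d; lia. }
    assert (Hd2 : (d < S N)%nat) by (apply Nat.lt_div2; lia).
    apply Rle_trans with (sum_f_R0 (cover_mass p0 (interleave cs)) (S (2 * d)));
      [apply sum_f_R0_nonneg_le; auto; apply cover_mass_nonneg|].
    rewrite interleave_mass_odd, (decomp_sum B (S N)) by lia. simpl pred.
    pose proof (IH d Hd2 (fun k => cs (S k)) (fun k => B (S k)) (fun k => HB (S k)) (fun k => HB0 (S k))).
    pose proof (HB O d).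
    assert (sum_f_R0 (fun i => B (S i)) d <= sum_f_R0 (fun i => B (S i)) N)
      by (apply sum_f_R0_nonneg_le; auto; lia).
    lra.
Qed.

Lemma outer_le_union (E : nat -> sample -> Prop) (w : nat -> R) W :
  (forall k, outer_le p0 (E k) (w k)) -> (forall k, 0 <= w k) ->
  (forall K, sum_f_R0 w K <= W) ->
  outer_le p0 (fun omega => exists k, E k omega) W.
Proof.
  intros HE Hw HW eps He.
  assert (Hhalf : forall k, 0 < (/2) ^ k) by (intro; apply pow_lt; lra).
  assert (X : forall k, {c : cover | covers c (E k) /\
     forall N, sum_f_R0 (cover_mass p0 c) N <= w k + eps * (/2) ^ S k}).
  { intro k. apply constructive_indefinite_description, HE.
    specialize (Hhalf (S k)). nra. }
  exists (interleave (fun k => proj1_sig (X k))). split.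
  - intros om [k Hk]. destruct (proj1 (proj2_sig (X k)) om Hk) as [i [l [Hi Hl]]].
    destruct (interleave_surj k (fun k => proj1_sig (X k)) i) as [m Hm].
    exists m, l. rewrite Hm. auto.
  - intro N. eapply Rle_trans.
    + apply (interleave_mass_le N _ (fun k => w k + eps * (/2) ^ S k)).
      * intro k. apply (proj2 (proj2_sig (X k))).
      * intro k. specialize (Hhalf (S k)). specialize (Hw k). nra.
    + rewrite sum_plus, sum_f_R0_scal_l, geometric_half_sum.
      specialize (HW N). specialize (Hhalf (S N)). nra.
Qed.

Lemma outer_le_of_null_set E : null_set p0 E -> forall eps, eps > 0 -> outer_le p0 E eps.
Proof.
  intros H eps He eps' He'. destruct (H eps He) as [c [Hc Hs]].
  exists (fun m => Some (c m)). split.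
  - intros om Hom. destruct (Hc om Hom) as [m Hm]. exists m, (c m). auto.
  - intro N. specialize (Hs N). unfold cover_mass. lra.
Qed.

Fixpoint repeat_list (x k : nat) : list nat :=
  match k with O => nil | S k => x :: repeat_list x k end.

Lemma cyl_prob_repeat x k : cyl_prob p0 (repeat_list x k) = p0 x ^ k.
Proof. induction k; simpl; auto. rewrite IHk. ring. Qed.

(* A [null_set] cover must put a cylinder in every slot, so the empty slots
   of an [outer_le] cover are filled with cylinders [x0 ... x0] of small mass. *)
Lemma null_set_of_outer_le x0 E :
  p0 x0 < 1 -> (forall eps, eps > 0 -> outer_le p0 E eps) -> null_set p0 E.
Proof.
  intros Hx H eps He.
  destruct (H (eps/4) ltac:(lra) (eps/4) ltac:(lra)) as [c [Hc Hs]].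
  assert (Hhalf : forall k, 0 < (/2) ^ k) by (intro; apply pow_lt; lra).
  assert (F : forall m : nat, {k : nat | p0 x0 ^ k <= eps/2 * (/2) ^ S m}).
  { intro m. apply constructive_indefinite_description.
    assert (Hy : 0 < eps/2 * (/2) ^ S m) by (specialize (Hhalf (S m)); nra).
    assert (Ha : Rabs (p0 x0) < 1) by (rewrite Rabs_right; [lra|apply Rle_ge, p0_ge0]).
    destruct (pow_lt_1_zero (p0 x0) Ha _ Hy) as [N HN].
    exists N. specialize (HN N (le_n _)).
    rewrite Rabs_right in HN; [lra|apply Rle_ge, pow_le, p0_ge0]. }
  exists (fun m => match c m with Some l => l | None => repeat_list x0 (proj1_sig (F m)) end).
  split.
  - intros om Hom. destruct (Hc om Hom) as [m [l [Hm Hl]]]. exists m. rewrite Hm. exact Hl.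
  - intro N. apply Rle_trans with (sum_f_R0 (fun m => cover_mass p0 c m + eps/2 * (/2) ^ S m) N).
    + apply sum_Rle. intros m _. unfold cover_mass. destruct (c m).
      * specialize (Hhalf (S m)). nra.
      * rewrite cyl_prob_repeat. pose proof (proj2_sig (F m)). lra.
    + rewrite sum_plus, sum_f_R0_scal_l, geometric_half_sum. specialize (Hs N).
      specialize (Hhalf (S N)). nra.
Qed.

Lemma almost_surely_mono (P Q : sample -> Prop) :
  (forall omega, P omega -> Q omega) -> almost_surely p0 P -> almost_surely p0 Q.
Proof. intros HPQ H eps He. destruct (H eps He) as [c [Hc Hs]]. exists c; split; auto. Qed.

Lemma almost_surely_and x0 (P Q : sample -> Prop) :
  p0 x0 < 1 -> almost_surely p0 P -> almost_surely p0 Q ->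
  almost_surely p0 (fun omega => P omega /\ Q omega).
Proof.
  intros Hx HP HQ. apply (null_set_of_outer_le x0 _ Hx). intros eps He.
  set (E := fun k omega => match k with O => ~ P omega | 1%nat => ~ Q omega | _ => False end).
  set (w := fun k : nat => match k with O | 1%nat => eps/2 | _ => 0 end).
  apply outer_le_mono with (F := fun omega => exists k, E k omega) (w := eps); [|lra|].
  { intros om Hom. apply not_and_or in Hom. destruct Hom; [exists O|exists 1%nat]; exact H. }
  apply outer_le_union with (w := w).
  - intros [|[|k]]; unfold E, w.
    + apply outer_le_of_null_set; auto. lra.
    + apply outer_le_of_null_set; auto. lra.
    + apply outer_le_empty. auto.
  - intros [|[|k]]; unfold w; lra.
  - intros [|K]; [simpl; unfold w; lra|].
    replace (sum_f_R0 w (S K)) with eps; [lra|].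
    induction K; [simpl; unfold w; lra|]. rewrite tech5, <- IHK. unfold w. lra.
Qed.

Lemma almost_surely_forall_le x0 (Q : nat -> sample -> Prop) M :
  p0 x0 < 1 -> (forall j, (j <= M)%nat -> almost_surely p0 (Q j)) ->
  almost_surely p0 (fun omega => forall j, (j <= M)%nat -> Q j omega).
Proof.
  intros Hx. induction M; intro H.
  - apply (almost_surely_mono (Q O)); [|apply H; lia].
    intros om HQ j Hj. replace j with O by lia. exact HQ.
  - apply (almost_surely_mono (fun om => (forall j, (j <= M)%nat -> Q j om) /\ Q (S M) om)).
    + intros om [H1 H2] j Hj. destruct (Nat.le_gt_cases j M); auto. replace j with (S M) by lia. auto.
    + apply (almost_surely_and x0); auto.
Qed.

End Outer_measure.

Fixpoint walk_sum (g : nat -> R) (omega : sample) (n : nat) : R :=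
  match n with O => 0 | S m => walk_sum g omega m + g (omega m) end.

Lemma walk_sum_shift g omega n :
  walk_sum g omega (S n) = g (omega O) + walk_sum g (shift omega) n.
Proof.
  induction n; simpl in *; [ring|].
  rewrite IHn. unfold shift. ring.
Qed.

Fixpoint count_pred (h : nat -> bool) (omega : sample) (n : nat) : nat :=
  match n with O => O | S m => (count_pred h omega m + if h (omega m) then 1 else 0)%nat end.

Lemma walk_sum_indicator (h : nat -> bool) t c omega n :
  walk_sum (fun x => (if h x then t else 0) - c) omega n =
  t * INR (count_pred h omega n) - INR n * c.
Proof.
  induction n; cbn [walk_sum count_pred]; [simpl; ring|].
  rewrite IHn, plus_INR, S_INR. destruct (h (omega n)); simpl; ring.
Qed.

(* The exponential moment of a Bernoulli(P) variable minus (P + eta), at the slope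
   [eta / (2 (P + eta))]. *)
Lemma bernoulli_chernoff_rate_lt_1 P eta :
  0 <= P <= 1 -> 0 < eta ->
  exp (eta / (2 * (P + eta)) - eta / 2) * P + exp (- (eta / 2)) * (1 - P) < 1.
Proof.
  intros HP He. set (t := eta / (2 * (P + eta))). set (c := eta / 2).
  assert (Et : t * (P + eta) = c) by (unfold t, c; field; lra).
  assert (Ht : 0 < t) by (unfold t; apply Rdiv_lt_0_compat; lra).
  assert (Ec : exp c * exp (- c) = 1) by (rewrite <- exp_plus, Rplus_opp_r; apply exp_0).
  assert (Eti : exp t * exp (- t) = 1) by (rewrite <- exp_plus, Rplus_opp_r; apply exp_0).
  assert (Etc : exp (t - c) = exp t * exp (- c)) by apply exp_plus.
  pose proof (exp_ineq1 (- t) ltac:(lra)) as Hmt. pose proof (exp_ineq1 c ltac:(unfold c; lra)) as Hc.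
  pose proof (exp_pos (- c)). pose proof (exp_pos t) as Hpt.
  assert (G1 : exp t * (1 - t) < 1)
    by (rewrite <- Eti; apply Rmult_lt_compat_l; lra).
  assert (Ht2 : t <= 1/2).
  { assert (t * eta <= eta / 2) by (unfold c in Et; nra). nra. }
  assert (G2 : (1 - t) * (1 + P * (exp t - 1)) <= 1 - t + P * t) by nra.
  assert (G3 : 1 - t + P * t < (1 - t) * (1 + c))
    by (assert (0 < t * eta) by nra; unfold c in *; nra).
  assert (1 + P * (exp t - 1) < exp c) by nra.
  rewrite Etc. nra.
Qed.

Section Large_deviations.
Variable p0 : rseq.
Hypothesis p0_ge0 : forall k, 0 <= p0 k.

Lemma outer_le_chernoff g Rr :
  (forall N, sum_f_R0 (fun x => p0 x * exp (g x)) N <= Rr) -> 0 <= Rr ->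
  forall n a, outer_le p0 (fun omega => a <= walk_sum g omega n) (exp (- a) * Rr ^ n).
Proof.
  intros HR HR0 n. induction n; intro a.
  - simpl. destruct (Rle_or_lt a 0).
    + apply outer_le_mono with (F := fun _ => True) (w := 1); auto;
        [pose proof (exp_ineq1_le (- a)); lra|apply outer_le_full].
    + apply outer_le_mono with (F := fun _ => False) (w := 0); [intros; lra|pose proof (exp_pos (- a)); lra|].
      apply outer_le_empty. auto.
  - apply outer_le_mono with
      (F := fun omega => exists x, omega O = x /\ a - g x <= walk_sum g (shift omega) n)
      (w := exp (- a) * (Rr * Rr ^ n)).
    { intros om H. exists (om O). split; auto. rewrite walk_sum_shift in H. lra. }
    { simpl. lra. }
    assert (Hw : forall x, 0 <= exp (- a) * Rr ^ n * (p0 x * exp (g x))).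
    { intro x. pose proof (exp_pos (- a)). pose proof (exp_pos (g x)).
      pose proof (pow_le _ n HR0). pose proof (p0_ge0 x).
      apply Rmult_le_pos; apply Rmult_le_pos; lra. }
    apply outer_le_union with (w := fun x => exp (- a) * Rr ^ n * (p0 x * exp (g x))); auto.
    + intro x. replace (exp (- a) * Rr ^ n * (p0 x * exp (g x)))
        with (p0 x * (exp (- (a - g x)) * Rr ^ n))
        by (replace (- (a - g x)) with (- a + g x) by ring; rewrite exp_plus; ring).
      apply (outer_le_prefix p0 p0_ge0 x (fun omega => a - g x <= walk_sum g omega n)), IHn.
    + intro K. rewrite sum_f_R0_scal_l. specialize (HR K).
      assert (0 <= exp (- a) * Rr ^ n) by (pose proof (exp_pos (- a)); pose proof (pow_le _ n HR0); nra).
      nra.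
Qed.

Lemma outer_le_count_upper (h : nat -> bool) P eta :
  0 <= P -> 0 < eta ->
  (forall N, sum_f_R0 (fun x => if h x then p0 x else 0) N <= P) ->
  (forall N, sum_f_R0 (fun x => if h x then 0 else p0 x) N <= 1 - P) ->
  exists r, 0 <= r < 1 /\
    forall n, outer_le p0 (fun omega => INR n * (P + eta) <= INR (count_pred h omega n)) (r ^ n).
Proof.
  intros HP He S1 S2.
  assert (HP1 : P <= 1).
  { specialize (S1 O). specialize (S2 O). simpl in *. destruct (h O); pose proof (p0_ge0 O); lra. }
  set (t := eta / (2 * (P + eta))).
  set (c := eta / 2).
  assert (Et : t * (P + eta) = c) by (unfold t, c; field; lra).
  assert (Ht : 0 < t) by (unfold t; apply Rdiv_lt_0_compat; lra).
  set (r := exp (t - c) * P + exp (- c) * (1 - P)).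
  assert (Hr0 : 0 <= r) by (unfold r; pose proof (exp_pos (t - c)); pose proof (exp_pos (- c)); nra).
  exists r. split; [split; [exact Hr0|apply bernoulli_chernoff_rate_lt_1; lra]|].
  intro n.
  apply outer_le_mono with (F := fun omega => 0 <= walk_sum (fun x => (if h x then t else 0) - c) omega n)
    (w := exp (- 0) * r ^ n).
  - intros om H. rewrite walk_sum_indicator, <- Et. nra.
  - rewrite Ropp_0, exp_0. lra.
  - apply outer_le_chernoff; auto. intro N.
    rewrite (sum_eq _ (fun x => exp (t - c) * (if h x then p0 x else 0) + exp (- c) * (if h x then 0 else p0 x)))
      by (intros i _; destruct (h i); [|replace (0 - c) with (- c) by ring]; ring).
    rewrite sum_plus, !sum_f_R0_scal_l.
    specialize (S1 N). specialize (S2 N). pose proof (exp_pos (t - c)). pose proof (exp_pos (- c)).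
    unfold r. nra.
Qed.

Lemma borel_cantelli_geometric x0 (Bad : nat -> sample -> Prop) r :
  p0 x0 < 1 -> 0 <= r < 1 -> (forall n, outer_le p0 (Bad n) (r ^ n)) ->
  almost_surely p0 (fun omega => exists n0, forall n, (n0 <= n)%nat -> ~ Bad n omega).
Proof.
  intros Hx [Hr0 Hr1] HB. apply (null_set_of_outer_le p0 p0_ge0 x0 _ Hx). intros eps Heps.
  destruct (pow_lt_1_zero r ltac:(rewrite Rabs_right; lra) (eps * (1 - r))) as [N HN];
    [apply Rmult_lt_0_compat; lra|].
  specialize (HN N (le_n _)). rewrite Rabs_right in HN by (apply Rle_ge, pow_le; lra).
  apply outer_le_mono with (F := fun omega => exists k, Bad (N + k)%nat omega) (w := eps); [|lra|].
  { intros om Hom. apply (not_ex_all_not _ _) with (n := N) in Hom.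
    apply not_all_ex_not in Hom. destruct Hom as [n Hn].
    apply imply_to_and in Hn. destruct Hn as [Hn1 Hn2]. apply NNPP in Hn2.
    exists (n - N)%nat. replace (N + (n - N))%nat with n by lia. exact Hn2. }
  apply outer_le_union with (w := fun k => r ^ (N + k));
    [exact p0_ge0|intro; apply HB|intro; apply pow_le; lra|].
  intro K. rewrite (sum_eq _ (fun k => r ^ N * r ^ k)) by (intros; apply pow_add).
  rewrite sum_f_R0_scal_l, tech3 by lra.
  assert (0 <= r ^ S K) by (apply pow_le; lra).
  assert (0 <= r ^ N) by (apply pow_le; lra).
  apply Rle_trans with (r ^ N / (1 - r)).
  - unfold Rdiv. rewrite <- Rmult_assoc. apply Rmult_le_compat_r; [left; apply Rinv_0_lt_compat; lra|nra].
  - apply Rmult_le_reg_r with (1 - r); [lra|]. unfold Rdiv. rewrite Rmult_assoc, Rinv_l; lra.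
Qed.

End Large_deviations.

Lemma count_obs_le omega j n : (count_obs omega j n <= n)%nat.
Proof. induction n; simpl; [lia|]. destruct (Nat.eqb (omega n) j); lia. Qed.

Lemma count_pred_eqb omega j n : count_pred (fun x => Nat.eqb x j) omega n = count_obs omega j n.
Proof. induction n; simpl; auto. Qed.

Lemma count_pred_negb (h : nat -> bool) omega n :
  (count_pred (fun x => negb (h x)) omega n + count_pred h omega n = n)%nat.
Proof. induction n; simpl; auto. destruct (h (omega n)); simpl; lia. Qed.

Lemma sum_count_obs_le (h : nat -> bool) omega N n :
  sum_f_R0 (fun j => if h j then INR (count_obs omega j n) else 0) N <= INR (count_pred h omega n).
Proof.
  induction n.
  - simpl. rewrite sum_eq_R0; [lra|]. intros i _. destruct (h i); reflexivity.
  - rewrite (sum_eq _ (fun j => (if h j then INR (count_obs omega j n) else 0) +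
        (if Nat.eqb j (omega n) then (if h j then 1 else 0) else 0))).
    + rewrite sum_plus, sum_f_R0_indicator. simpl count_pred. rewrite plus_INR.
      destruct (Nat.leb (omega n) N), (h (omega n)); simpl; lra.
    + intros i _. simpl count_obs. rewrite plus_INR, (Nat.eqb_sym i (omega n)).
      destruct (Nat.eqb (omega n) i), (h i); simpl; ring.
Qed.

Lemma emp_nonneg omega n j : 0 <= emp omega n j.
Proof.
  unfold emp, Rdiv. destruct n; [simpl; rewrite Rinv_0; lra|].
  apply Rmult_le_pos; [apply pos_INR|left; apply Rinv_0_lt_compat, lt_0_INR; lia].
Qed.

Lemma emp_le_1 omega n j : emp omega n j <= 1.
Proof.
  unfold emp, Rdiv. destruct n; [simpl; rewrite Rinv_0; lra|].
  assert (0 < INR (S n)) by (apply lt_0_INR; lia).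
  apply Rmult_le_reg_r with (INR (S n)); [lra|]. unfold Rdiv.
  rewrite Rmult_assoc, Rinv_l, Rmult_1_r, Rmult_1_l by lra. apply le_INR, count_obs_le.
Qed.

Lemma Delta_pos_of_sq_close p q s :
  is_knot p s -> (forall k, (q k - p k) ^ 2 < (Defs.Delta p s / 4) ^ 2) -> is_knot q s.
Proof.
  intros [Hs HD] Hclose. split; [exact Hs|].
  assert (Habs : forall k, - (Defs.Delta p s / 4) < q k - p k < Defs.Delta p s / 4).
  { intro k. specialize (Hclose k). split; nra. }
  pose proof (Habs (S s)). pose proof (Habs s). pose proof (Habs (pred s)).
  unfold Defs.Delta in *. lra.
Qed.

Lemma eventually_forall_le (P : nat -> nat -> Prop) M :
  (forall j, (j <= M)%nat -> exists n0, forall n, (n0 <= n)%nat -> P j n) ->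
  exists n0, forall n, (n0 <= n)%nat -> forall j, (j <= M)%nat -> P j n.
Proof.
  induction M; intro H.
  - destruct (H O (le_n _)) as [n0 Hn0]. exists n0. intros n Hn j Hj. replace j with O by lia. auto.
  - destruct IHM as [n1 Hn1]; [intros j Hj; apply H; lia|].
    destruct (H (S M) (le_n _)) as [n2 Hn2]. exists (Nat.max n1 n2). intros n Hn j Hj.
    destruct (Nat.le_gt_cases j M); [apply Hn1; lia|]. replace j with (S M) by lia. apply Hn2; lia.
Qed.

Section Empirical_pmf.
Variable p0 : rseq.
Hypothesis p0_ge0 : forall k, 0 <= p0 k.
Hypothesis p0_sum1 : infinite_sum p0 1.

Lemma pmf_partial_sum_le_1 N : sum_f_R0 p0 N <= 1.
Proof. apply partial_sum_le_series; auto. Qed.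

Lemma pmf_le_1 k : p0 k <= 1.
Proof. apply term_le_series with (f := p0); auto. Qed.

Lemma pmf_exists_lt_1 : exists x0, p0 x0 < 1.
Proof.
  destruct (Rlt_or_le (p0 O) 1) as [H|H]; [exists O; exact H|].
  exists 1%nat. pose proof (pmf_partial_sum_le_1 1). simpl in *. lra.
Qed.

Lemma restrict_nonneg (h : nat -> bool) x : 0 <= (if h x then p0 x else 0).
Proof. destruct (h x); [apply p0_ge0|apply Rle_refl]. Qed.

Lemma pmf_complement (h : nat -> bool) P :
  infinite_sum (fun x => if h x then p0 x else 0) P ->
  infinite_sum (fun x => if h x then 0 else p0 x) (1 - P).
Proof.
  intro HP. apply (infinite_sum_ext (fun x => p0 x + -1 * (if h x then p0 x else 0))).
  - intro x. destruct (h x); ring.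
  - replace (1 - P) with (1 + -1 * P) by ring. apply infinite_sum_plus; [|apply infinite_sum_scal]; auto.
Qed.

Lemma pmf_tail_sum M :
  infinite_sum (fun x => if Nat.ltb M x then p0 x else 0) (1 - sum_f_R0 p0 M).
Proof.
  apply (infinite_sum_ext (fun x => if Nat.leb x M then 0 else p0 x)).
  - intro x. rewrite Nat.leb_antisym. destruct (Nat.ltb M x); reflexivity.
  - apply pmf_complement, (infinite_sum_eventually_const _ _ M). intros N HN.
    rewrite (sum_eq _ (fun x => if Nat.ltb M x then 0 else p0 x))
      by (intros x _; rewrite Nat.leb_antisym; destruct (Nat.ltb M x); reflexivity).
    rewrite sum_f_R0_truncate. f_equal. lia.
Qed.

Lemma eventually_count_lt (h : nat -> bool) P eta :
  infinite_sum (fun x => if h x then p0 x else 0) P -> 0 < eta ->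
  almost_surely p0 (fun omega =>
    exists n0, forall n, (n0 <= n)%nat -> INR (count_pred h omega n) < INR n * (P + eta)).
Proof.
  intros HP He.
  destruct pmf_exists_lt_1 as [x0 Hx0].
  destruct (outer_le_count_upper p0 p0_ge0 h P eta) as [r [Hr HB]]; auto.
  - apply Rle_trans with (if h O then p0 O else 0);
      [apply restrict_nonneg|apply (term_le_series _ _ O (restrict_nonneg h) HP)].
  - apply partial_sum_le_series; [apply restrict_nonneg|exact HP].
  - apply partial_sum_le_series; [|apply pmf_complement, HP].
    intro x. destruct (h x); [apply Rle_refl|apply p0_ge0].
  - apply (almost_surely_mono p0 (fun omega => exists n0, forall n, (n0 <= n)%nat ->
        ~ INR n * (P + eta) <= INR (count_pred h omega n))).
    + intros om [n0 Hn0]. exists n0. intros n Hn. apply Rnot_le_lt, Hn0, Hn.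
    + apply (borel_cantelli_geometric p0 p0_ge0 x0 _ r); auto.
Qed.

Lemma eventually_emp_close j eta : 0 < eta ->
  almost_surely p0 (fun omega =>
    exists n0, forall n, (n0 <= n)%nat -> Rabs (emp omega n j - p0 j) < eta).
Proof.
  intro He. destruct pmf_exists_lt_1 as [x0 Hx0].
  assert (Hj : infinite_sum (fun x => if Nat.eqb x j then p0 x else 0) (p0 j)).
  { apply (infinite_sum_eventually_const _ _ j). intros N HN.
    rewrite sum_f_R0_indicator. destruct (Nat.leb_spec j N); [reflexivity|lia]. }
  assert (Hnj : infinite_sum (fun x => if negb (Nat.eqb x j) then p0 x else 0) (1 - p0 j)).
  { apply (infinite_sum_ext (fun x => if Nat.eqb x j then 0 else p0 x)).
    - intro x. destruct (Nat.eqb x j); reflexivity.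
    - apply pmf_complement, Hj. }
  apply (almost_surely_mono p0 (fun omega =>
      (exists n0, forall n, (n0 <= n)%nat ->
         INR (count_pred (fun x => Nat.eqb x j) omega n) < INR n * (p0 j + eta)) /\
      (exists n0, forall n, (n0 <= n)%nat ->
         INR (count_pred (fun x => negb (Nat.eqb x j)) omega n) < INR n * ((1 - p0 j) + eta)))).
  - intros om [[n1 H1] [n2 H2]]. exists (S (Nat.max n1 n2)). intros n Hn.
    specialize (H1 n ltac:(lia)). specialize (H2 n ltac:(lia)).
    pose proof (count_pred_negb (fun x => Nat.eqb x j) om n) as Hsum.
    apply (f_equal INR) in Hsum. rewrite plus_INR, count_pred_eqb in Hsum.
    rewrite count_pred_eqb in H1.
    assert (Hn0 : 0 < INR n) by (apply lt_0_INR; lia).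
    assert (Ee : emp om n j * INR n = INR (count_obs om j n)) by (unfold emp; field; lra).
    apply Rabs_def1; nra.
  - apply (almost_surely_and p0 p0_ge0 x0); auto; apply eventually_count_lt; auto.
Qed.

Lemma emp_sq_dist_partial_le omega n M eta tau :
  (0 < n)%nat -> (forall j, (j <= M)%nat -> Rabs (emp omega n j - p0 j) <= eta) ->
  INR (count_pred (Nat.ltb M) omega n) <= INR n * tau ->
  forall N, sum_f_R0 (fun j => (emp omega n j - p0 j) ^ 2) N <=
            INR (S M) * eta ^ 2 + tau + (1 - sum_f_R0 p0 M).
Proof.
  intros Hn Hclose Htail N.
  assert (Hn0 : 0 < INR n) by (apply lt_0_INR; lia).
  apply Rle_trans with (sum_f_R0 (fun j => (if Nat.ltb M j then 0 else eta ^ 2) +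
       (/ INR n * (if Nat.ltb M j then INR (count_obs omega j n) else 0) +
        (if Nat.ltb M j then p0 j else 0))) N).
  - apply sum_Rle. intros j _.
    pose proof (emp_nonneg omega n j). pose proof (emp_le_1 omega n j).
    pose proof (p0_ge0 j). pose proof (pmf_le_1 j).
    destruct (Nat.ltb_spec M j).
    + replace (/ INR n * INR (count_obs omega j n)) with (emp omega n j) by (unfold emp, Rdiv; ring).
      nra.
    + specialize (Hclose j ltac:(lia)). rewrite <- pow2_abs.
      pose proof (Rabs_pos (emp omega n j - p0 j)). nra.
  - rewrite !sum_plus, sum_f_R0_scal_l, sum_f_R0_truncate, sum_cte.
    pose proof (partial_sum_le_series _ _ (restrict_nonneg (Nat.ltb M)) (pmf_tail_sum M) N).
    assert (Hcount : / INR n * sum_f_R0 (fun j => if Nat.ltb M j then INR (count_obs omega j n) else 0) N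
                     <= tau).
    { apply Rmult_le_reg_l with (INR n); [lra|]. rewrite <- Rmult_assoc, Rinv_r, Rmult_1_l by lra.
      pose proof (sum_count_obs_le (Nat.ltb M) omega N n). lra. }
    assert (INR (S (Nat.min N M)) <= INR (S M)) by (apply le_INR; lia).
    pose proof (pow2_ge_0 eta). nra.
Qed.

Lemma almost_surely_emp_sq_dist_le delta : 0 < delta ->
  almost_surely p0 (fun omega => exists n0, forall n, (n0 <= n)%nat ->
    forall N, sum_f_R0 (fun j => (emp omega n j - p0 j) ^ 2) N <= delta).
Proof.
  intro Hdelta. destruct pmf_exists_lt_1 as [x0 Hx0].
  set (d := Rmin delta 1).
  assert (Hd : 0 < d <= 1) by (split; [apply Rmin_glb_lt; lra|apply Rmin_r]).
  assert (Hd_delta : d <= delta) by apply Rmin_l.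
  destruct (p0_sum1 (d / 4)) as [M HM]; [lra|].
  specialize (HM M (le_n _)). unfold Rdist in HM. apply Rabs_def2 in HM.
  set (T := 1 - sum_f_R0 p0 M).
  assert (HT : 0 <= T < d / 4) by (pose proof (pmf_partial_sum_le_1 M); unfold T; lra).
  set (eta := d / (4 * (INR M + 2))).
  pose proof (pos_INR M) as HM0.
  assert (Heta : 0 < eta) by (unfold eta; apply Rdiv_lt_0_compat; lra).
  assert (Heta_M : eta * (INR M + 2) = d / 4) by (unfold eta; field; lra).
  apply (almost_surely_mono p0 (fun omega =>
    (forall j, (j <= M)%nat -> exists n0, forall n, (n0 <= n)%nat -> Rabs (emp omega n j - p0 j) < eta) /\
    (exists n0, forall n, (n0 <= n)%nat -> INR (count_pred (Nat.ltb M) omega n) < INR n * (T + eta)))).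
  - intros om [Hclose [n2 Hcount]].
    destruct (eventually_forall_le (fun j n => Rabs (emp om n j - p0 j) < eta) M Hclose) as [n1 Hn1].
    exists (S (Nat.max n1 n2)). intros n Hn N.
    eapply Rle_trans; [apply (emp_sq_dist_partial_le om n M eta (T + eta)); [lia| |]|].
    + intros j Hj. left. apply Hn1; [lia|exact Hj].
    + left. apply Hcount. lia.
    + fold T. rewrite S_INR.
      assert (eta <= 1) by nra.
      assert ((INR M + 1) * eta ^ 2 <= (INR M + 1) * eta) by (apply Rmult_le_compat_l; nra).
      lra.
  - apply (almost_surely_and p0 p0_ge0 x0); auto.
    + apply (almost_surely_forall_le p0 p0_ge0 x0); auto.
      intros j _. apply eventually_emp_close; auto.
    + apply eventually_count_lt; [apply pmf_tail_sum|auto].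
Qed.

End Empirical_pmf.

Theorem proposition3 (p0 : rseq) (s : nat) :
  is_pmf p0 -> support_ok p0 -> inC p0 ->
  (0 < s)%nat -> is_knot p0 s ->
  almost_surely p0 (fun omega =>
    exists n0 : nat, forall n : nat, (n0 <= n)%nat ->
      forall q : rseq, is_LSE omega n q -> is_knot q s).
Proof.
  intros [p0_ge0 p0_sum1] _ Cp0 _ Hknot.
  set (D := Defs.Delta p0 s).
  assert (HD : 0 < D) by apply Hknot.
  eapply almost_surely_mono;
    [|apply (almost_surely_emp_sq_dist_le p0 p0_ge0 p0_sum1 (D ^ 2 / 64)); nra].
  intros omega [n0 Hn0]. exists n0. intros n Hn q Hq.
  destruct (series_of_bounded_partial_sums _ (D ^ 2 / 64) (fun j => pow2_ge_0 _) (Hn0 n Hn))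
    as [E [HE HE_le]].
  apply (Delta_pos_of_sq_close p0 q s Hknot). intro k. fold D.
  pose proof (LSE_sq_dist_le omega n q p0 E Cp0 Hq HE k). nra.
Qed.
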